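(* Let $r\ge 2$ and $k\ge 2$, let $H=(V,\mathcal{E})$ be an $r$-uniform hypergraph and let $c$ be a Nash equilibrium $k$-coloring of $H$ for the game with CF players. Let $j(e)=|\{v\in e: c(e\setminus\{v\})=c(e)\}|$ for $e\in\mathcal{E}$ and $\hat j=\sum_{e\in\mathcal{E}}j(e)$. Then (1) $\hat j\le \dfrac{|\mathcal{E}|\,r(r-1)}{\frac r2+k-1}$; (2) $SW(c)\ge |\mathcal{E}|\,r\,\dfrac{2k-r}{2k+r-2}$.
   Context: A hypergraph $H=(V,\mathcal{E})$ consists of a finite set $V$ of vertices and a finite set $\mathcal{E}$ of nonempty subsets of $V$; it is $r$-uniform if $|e|=r$ for all $e\in\mathcal{E}$. A $k$-coloring is a map $c:V\to[k]$; for $S\subseteq V$, $c(S)$ is the set of colors of vertices of $S$. $\mathcal{E}(v)=\{e\in\mathcal{E}: v\in e\}$. With CF (conflict-free seeking) players, $u_v(c)=|\{e\in\mathcal{E}(v): |c(e)|=|c(e\setminus\{v\})|+1\}|$, and $SW(c)=\sum_{v\in V}u_v(c)$. A coloring $c$ is a Nash equilibrium if $u_v(c)\ge u_v(c_{-v},i)$ for all $v\in V$, $i\in[k]$, where $(c_{-v},i)$ is $c$ with the color of $v$ replaced by $i$. *)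

From HB Require Import structures.
From mathcomp Require Import all_boot all_order all_algebra.
Set Implicit Arguments. Unset Strict Implicit. Unset Printing Implicit Defensive.
Import Order.TTheory GRing.Theory Num.Theory.

Definition hypergraph (V : finType) (E : {set {set V}}) : Prop :=
  forall e, e \in E -> e != set0.

Definition uniform (V : finType) (r : nat) (E : {set {set V}}) : Prop :=
  forall e, e \in E -> #|e| = r.

(* k-colorings: maps V -> 'I_k; c(S) is the image set c @: S. *)

Definition util_CF (V : finType) (k : nat) (E : {set {set V}})
  (c : V -> 'I_k) (v : V) : nat :=
  #|[set e in E | (v \in e) && (#|c @: e| == #|c @: (e :\ v)|.+1)]|.

Definition recolor (V : finType) (k : nat) (c : V -> 'I_k) (v : V) (i : 'I_k)
  : V -> 'I_k := fun x => if x == v then i else c x.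

Definition social_welfare (V : finType) (k : nat) (E : {set {set V}})
  (c : V -> 'I_k) : nat := \sum_(v : V) util_CF E c v.

Definition nash_eq (V : finType) (k : nat) (E : {set {set V}})
  (c : V -> 'I_k) : Prop :=
  forall (v : V) (i : 'I_k), util_CF E (recolor c v i) v <= util_CF E c v.

Definition jcount (V : finType) (k : nat) (c : V -> 'I_k) (e : {set V}) : nat :=
  #|[set v in e | c @: (e :\ v) == c @: e]|.

Definition jhat (V : finType) (k : nat) (E : {set {set V}}) (c : V -> 'I_k) : nat :=
  \sum_(e in E) jcount c e.

(** Call [v] unique in [e] when no other vertex of [e] has its color; then
   [u_v] counts the edges in which [v] is unique and [j(e)] the non-unique
   vertices of [e], so [SW + jhat = r |E|].  In an equilibrium, recoloring
   [v] with each of the [k] colors in turn shows that the total number of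
   colors missing from the [e \ v] is at most [k SW].  Conversely, colors of
   non-unique vertices are shared, so [|c(e)| <= r - j(e)/2], and [e] misses
   at least [r k - r |c(e)| + r - j(e) >= r (k - r + 1) + (r/2 - 1) j(e)] such
   colors.  Comparing the two bounds gives [(k + r/2 - 1) jhat <= r (r-1) |E|],
   and (2) follows from [SW = r |E| - jhat]. *)
From HB Require Import structures.
From mathcomp Require Import all_boot all_order all_algebra.
From mathcomp Require Import zify ring lra.
Import Order.TTheory GRing.Theory Num.Theory.
Set Implicit Arguments. Unset Strict Implicit.

Lemma double_card_imset_le (aT rT : finType) (f : aT -> rT) (A : {set aT}) :
  (forall x, x \in A -> exists2 y, y \in A & (y != x) && (f y == f x)) ->
  2 * #|f @: A| <= #|A|.
Proof.
move=> shared; rewrite -[#|A|]sum1_card.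
rewrite (partition_big f (fun y => y \in f @: A)) => [|x xA]; last exact: imset_f.
rewrite mulnC -sum_nat_const; apply: leq_sum => _ /imsetP[x xA ->].
have [y yA /andP[yx /eqP fyx]] := shared x xA.
rewrite sum1dep_card -[2]/(true.+1) -yx eq_sym -cards2.
apply/subset_leq_card/subsetP => z; rewrite !inE.
by case/orP => /eqP ->; rewrite ?fyx eqxx ?xA ?yA.
Qed.

Lemma sum_card_uniform (V : finType) (r : nat) (E : {set {set V}}) :
  uniform r E -> \sum_(e in E) #|e| = #|E| * r.
Proof. by move=> unif; rewrite (eq_bigr _ unif) sum_nat_const. Qed.

Section Coloring.
Variables (V : finType) (k : nat) (c : V -> 'I_k).

Definition uniq_color (e : {set V}) (v : V) : bool := c v \notin c @: (e :\ v).

Lemma card_imset_setD1 (e : {set V}) (v : V) :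
  v \in e -> #|c @: e| = uniq_color e v + #|c @: (e :\ v)|.
Proof. by move=> ve; rewrite -{1}(setD1K ve) imsetU1 cardsU1. Qed.

Lemma jcountE (e : {set V}) : jcount c e = \sum_(v in e) ~~ uniq_color e v.
Proof.
rewrite /jcount -sum1dep_card big_mkcondr /=; apply: eq_bigr => v ve.
rewrite /uniq_color negbK -{2}(setD1K ve) imsetU1.
have -> : (c @: (e :\ v) == c v |: c @: (e :\ v)) = (c v \in c @: (e :\ v)).
  apply/eqP/idP => [-> | cv]; first exact: setU11.
  by apply/setP => x; rewrite !inE; case: eqP => // ->.
by case: (c v \in _).
Qed.

Lemma sum_uniq_color_jcount (e : {set V}) :
  \sum_(v in e) uniq_color e v + jcount c e = #|e|.
Proof.
rewrite jcountE -big_split -sum1_card; apply: eq_bigr => v _.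
by rewrite /= addnC addn_negb.
Qed.

Lemma sum_missing_colorsE (e : {set V}) :
  \sum_(v in e) #|~: (c @: (e :\ v))| + #|e| * #|c @: e|
  = #|e| * k + \sum_(v in e) uniq_color e v.
Proof.
rewrite -[#|e| * #|_|]sum_nat_const -[#|e| * k]sum_nat_const -!big_split.
apply: eq_bigr => v ve /=; rewrite (card_imset_setD1 ve).
by rewrite addnCA [#|~: _| + _]addnC cardsC card_ord addnC.
Qed.

Lemma double_card_imset_jcount (e : {set V}) :
  2 * #|c @: e| + jcount c e <= 2 * #|e|.
Proof.
set U := [set v in e | uniq_color e v].
set N := [set v in e | ~~ uniq_color e v].
have cardU : #|U| = \sum_(v in e) uniq_color e v by rewrite -sum1dep_card big_mkcondr.
have cardN : #|N| = jcount c e by rewrite jcountE -sum1dep_card big_mkcondr.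
have eUN : e = U :|: N.
  by apply/setP => x; rewrite !inE; case: (x \in e); case: (uniq_color e x).
have colors_e : #|c @: e| <= #|U| + #|c @: N|.
  rewrite {1}eUN imsetU; apply: leq_trans (leq_card_setU _ _) _.
  by rewrite leq_add2r leq_imset_card.
have colors_N : 2 * #|c @: N| <= #|N|.
  apply: double_card_imset_le => v; rewrite inE /uniq_color negbK.
  case/andP=> ve /imsetP[w]; rewrite !inE => /andP[wv we] cvw.
  exists w; last by rewrite wv cvw eqxx.
  rewrite !inE we /uniq_color negbK; apply/imsetP; exists v => //.
  by rewrite !inE ve andbT eq_sym.
have := sum_uniq_color_jcount e; rewrite -cardU -cardN; lia.
Qed.

Lemma sum_missing_colors_ge (e : {set V}) :
  2 * #|e| * k + 2 * #|e| + #|e| * jcount c e <=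
  2 * \sum_(v in e) #|~: (c @: (e :\ v))| + 2 * #|e| * #|e| + 2 * jcount c e.
Proof.
have := sum_missing_colorsE e; have := sum_uniq_color_jcount e.
have := double_card_imset_jcount e.
set M := \sum_(v in e) #|~: _|; set u := \sum_(v in e) _.
set m := #|c @: e|; set j := jcount c e => colors sum_j sum_M.
have : #|e| * (2 * m + j) <= #|e| * (2 * #|e|) by rewrite leq_mul2l colors orbT.
nia.
Qed.

Lemma util_CFE (E : {set {set V}}) (v : V) :
  util_CF E c v = \sum_(e in E | v \in e) uniq_color e v.
Proof.
rewrite /util_CF -sum1dep_card !big_mkcondr /=; apply: eq_bigr => e _.
case ve: (v \in e) => //=; rewrite (card_imset_setD1 ve).
by case: (uniq_color e v); rewrite ?eqxx // add0n; case: eqP => // /n_Sn.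
Qed.

End Coloring.

Section Equilibrium.
Variables (V : finType) (k : nat) (c : V -> 'I_k) (E : {set {set V}}).

Lemma util_CF_recolor (v : V) (i : 'I_k) :
  util_CF E (recolor c v i) v = \sum_(e in E | v \in e) (i \notin c @: (e :\ v)).
Proof.
rewrite util_CFE; apply: eq_bigr => e _; rewrite /uniq_color /recolor eqxx.
by rewrite (@eq_in_imset _ _ _ c) // => x; rewrite !inE => /andP[/negbTE ->].
Qed.

Lemma exchange_incidence (F : {set V} -> V -> nat) :
  \sum_v \sum_(e in E | v \in e) F e v = \sum_(e in E) \sum_(v in e) F e v.
Proof.
under eq_bigr do rewrite big_mkcond.
rewrite exchange_big [RHS]big_mkcond; apply: eq_bigr => e _ /=.
by case: (e \in E); [rewrite [RHS]big_mkcond | rewrite big1].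
Qed.

Lemma social_welfare_jhat : social_welfare E c + jhat E c = \sum_(e in E) #|e|.
Proof.
rewrite /social_welfare (eq_bigr _ (fun v _ => util_CFE c E v)) exchange_incidence.
by rewrite /jhat -big_split; apply: eq_bigr => e _ /=; rewrite sum_uniq_color_jcount.
Qed.

(* The left-hand side is [\sum_i u_v(recolor c v i)]. *)
Lemma nash_missing_colors (v : V) :
  nash_eq E c ->
  \sum_(e in E | v \in e) #|~: (c @: (e :\ v))| <= k * util_CF E c v.
Proof.
move=> nash; apply: (@leq_trans (\sum_(i < k) util_CF E (recolor c v i) v)).
  under [X in _ <= X]eq_bigr do rewrite util_CF_recolor.
  rewrite exchange_big; apply: eq_leq; apply: eq_bigr => e _.
  by rewrite -sum1_card big_mkcond; apply: eq_bigr => i _; rewrite inE.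
by rewrite -[k in k * _]card_ord -sum_nat_const; apply: leq_sum => i _; apply: nash.
Qed.

Lemma sum_missing_colors_le :
  nash_eq E c ->
  \sum_(e in E) \sum_(v in e) #|~: (c @: (e :\ v))| <= k * social_welfare E c.
Proof.
move=> nash; rewrite -exchange_incidence /social_welfare big_distrr.
by apply: leq_sum => v _; apply: nash_missing_colors.
Qed.

Lemma jhat_le (r : nat) :
  uniform r E -> nash_eq E c ->
  (2 * k + r - 2) * jhat E c <= 2 * r * (r - 1) * #|E|.
Proof.
move=> unif nash; have := sum_missing_colors_le nash.
have := social_welfare_jhat; rewrite (sum_card_uniform unif).
have : \sum_(e in E) (2 * r * k + 2 * r + r * jcount c e) <=
       \sum_(e in E) (2 * \sum_(v in e) #|~: (c @: (e :\ v))| + 2 * r * r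
                      + 2 * jcount c e).
  by apply: leq_sum => e eE; rewrite -(unif e eE) sum_missing_colors_ge.
rewrite !big_split /= -!big_distrr !sum_nat_const /= -/(jhat E c).
set M := \sum_(e in E) _; set SW := social_welfare E c; set J := jhat E c.
set n := #|E|; nia.
Qed.

End Equilibrium.

Local Open Scope ring_scope.

Theorem mainTheorem6 (V : finType) (r k : nat) (E : {set {set V}})
  (c : V -> 'I_k) :
  (2 <= r)%N -> (2 <= k)%N ->
  hypergraph E -> uniform r E -> nash_eq E c ->
  ((jhat E c)%:R : rat) <=
    (#|E| * r * (r - 1))%:R / ((r%:R : rat) / 2%:R + k%:R - 1)
  /\
  ((social_welfare E c)%:R : rat) >=
    (#|E| * r)%:R * ((2 * k)%:R - r%:R) / ((2 * k + r - 2)%N%:R).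
Proof.
move=> r2 k2 _ unif nash.
have jhat_bound := jhat_le unif nash.
have sum_SW := social_welfare_jhat c E; rewrite (sum_card_uniform unif) in sum_SW.
have {}jhat_bound : (2 * k%:R + r%:R - 2) * (jhat E c)%:R
                    <= 2 * r%:R * (r%:R - 1) * #|E|%:R :> rat.
  move: jhat_bound; rewrite -(ler_nat rat) !natrM !natrB ?natrD ?natrM //; [nra | lia | lia].
have {}sum_SW : (social_welfare E c)%:R + (jhat E c)%:R = #|E|%:R * r%:R :> rat.
  by rewrite -natrD sum_SW natrM.
have r_ge2 : 2 <= r%:R :> rat by rewrite ler_nat.
have k_ge2 : 2 <= k%:R :> rat by rewrite ler_nat.
split.
  rewrite ler_pdivlMr; last by lra.
  by rewrite !natrM natrB ?(ltnW r2) //; lra.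
rewrite ler_pdivrMr; last by rewrite ltr0n; lia.
by rewrite natrB ?natrD ?natrM; [nra | lia].
Qed.
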